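(* Let $A(z,\lambda)\in\mathfrak{gl}_2(\mathbb{C}((z))[[\lambda]])$ and $R(z,\lambda)\in\mathrm{GL}_2(\mathbb{C}((z))[[\lambda]])$ satisfy: (1) $A$ is diagonal; (2) $R(z,0)\in\mathfrak{gl}_2(\mathbb{C}[[z]])$; (3) $\det R(z,0)\in\mathbb{C}[[z]]$ has a first-order zero at $z=0$; (4) $\tilde A:=R^{-1}AR+\lambda R^{-1}\frac{dR}{dz}\in\mathfrak{gl}_2(\mathbb{C}[[z,\lambda]])$. Then $\operatorname{res}_{z=0}\operatorname{tr}A(z,\lambda)=-\lambda$.
   Context: Residues of elements of $\mathbb{C}((z))[[\lambda]]$ are taken coefficientwise in $\lambda$. *)

(* C = R[i] for R : realType (a model of the real numbers). *)
From mathcomp Require Import all_boot all_order all_algebra.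
From mathcomp Require Import reals.
From mathcomp Require Export complex.
Set Implicit Arguments. Unset Strict Implicit. Unset Printing Implicit Defensive.
Import GRing.Theory Num.Theory.
Local Open Scope ring_scope.

Section LaurentSeries.
Variable K : fieldType.

(* A Laurent series in z: z^(lo f) * sum_(k >= 0) cf f k * z^k.
   (Representation is not unique; equality is always stated on coefficients.) *)
Record LS := mkLS { lo : int; cf : nat -> K }.

Definition lscoef (f : LS) (m : int) : K :=
  match (m - lo f)%R with Posz k => cf f k | Negz _ => 0 end.

Definition ls0 : LS := mkLS 0 (fun _ => 0).
Definition ls1 : LS := mkLS 0 (fun k => if k is 0%N then 1 else 0).

Definition lsadd (f g : LS) : LS :=
  let l := Order.min (lo f) (lo g) in
  mkLS l (fun k => lscoef f (l + k%:Z) + lscoef g (l + k%:Z)).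

Definition lsopp (f : LS) : LS := mkLS (lo f) (fun k => - cf f k).

Definition lsmul (f g : LS) : LS :=
  mkLS (lo f + lo g) (fun k => \sum_(i < k.+1) cf f i * cf g (k - i)%N).

Definition lsderiv (f : LS) : LS :=
  mkLS (lo f - 1) (fun k => (lo f + k%:Z)%:~R * cf f k).

(* Elements of C((z))[[lambda]]: F n is the coefficient of lambda^n. *)
Definition PS := nat -> LS.

Definition pscoef (F : PS) (n : nat) (m : int) : K := lscoef (F n) m.

Definition ps0 : PS := fun _ => ls0.
Definition ps1 : PS := fun n => if n is 0%N then ls1 else ls0.
Definition psadd (F G : PS) : PS := fun n => lsadd (F n) (G n).
Definition psopp (F : PS) : PS := fun n => lsopp (F n).
Definition psmul (F G : PS) : PS :=
  fun n => \big[lsadd/ls0]_(k < n.+1) lsmul (F k) (G (n - k)%N).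
Definition pslam (F : PS) : PS := fun n => if n is n'.+1 then F n' else ls0.
Definition psderiv (F : PS) : PS := fun n => lsderiv (F n).

Definition pseq (F G : PS) : Prop := forall n m, pscoef F n m = pscoef G n m.

Definition ps_holo (F : PS) : Prop := forall n m, (m < 0)%R -> pscoef F n m = 0.

Definition psres (F : PS) : PS := fun n => mkLS 0 (fun k => if k is 0%N then lscoef (F n) (-1) else 0).

Definition pslambda : PS := pslam ps1.

Definition M2 := 'I_2 -> 'I_2 -> PS.

Definition m2one : M2 := fun i j => if i == j then ps1 else ps0.
Definition m2add (A B : M2) : M2 := fun i j => psadd (A i j) (B i j).
Definition m2mul (A B : M2) : M2 :=
  fun i j => \big[psadd/ps0]_(k < 2) psmul (A i k) (B k j).
Definition m2lam (A : M2) : M2 := fun i j => pslam (A i j).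
Definition m2deriv (A : M2) : M2 := fun i j => psderiv (A i j).
Definition m2eq (A B : M2) : Prop := forall i j, pseq (A i j) (B i j).
Definition m2tr (A : M2) : PS := psadd (A ord0 ord0) (A ord_max ord_max).
Definition m2det (A : M2) : PS :=
  psadd (psmul (A ord0 ord0) (A ord_max ord_max))
        (psopp (psmul (A ord0 ord_max) (A ord_max ord0))).

Definition m2diag (A : M2) : Prop := forall i j, i != j -> pseq (A i j) ps0.

(* R^{-1} A R + lambda R^{-1} dR/dz, with S = R^{-1} *)
Definition gauge (S A R : M2) : M2 :=
  m2add (m2mul (m2mul S A) R) (m2lam (m2mul S (m2deriv R))).

End LaurentSeries.

From HB Require Import structures.
From mathcomp Require Import all_boot all_order all_algebra.
From mathcomp Require Import reals complex.
From mathcomp Require Import ring zify.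
From mathcomp Require Import boolp.
Set Implicit Arguments. Unset Strict Implicit. Unset Printing Implicit Defensive.
Import Order.TTheory GRing.Theory Num.Theory.
Local Open Scope ring_scope.

(* The trace is invariant under conjugation, so tr A~ = tr A + lambda tr (R^-1 R'),
   and tr (R^-1 R') = D'/D with D = det R (Jacobi).  As A~ is holomorphic,
   res tr A = - lambda res (D'/D).  The lambda^0-part of D'/D is D_0'/D_0, whose
   residue is 1 because D_0 = det R(z,0) has a simple zero at 0.  For n > 0,
   n (D'/D)_n = ((theta D / D)')_n with theta = lambda d/dlambda, a z-derivative,
   so it has no residue.
   Laurent series in z and power series in lambda are made into commutative rings
   so that these identities are ring computations. *)

Section Convolution.
Variable T : comNzRingType.
Implicit Types a b c : nat -> T.

Definition conv a b k := \sum_(i < k.+1) a i * b (k - i)%N.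

Definition delta0 (k : nat) : T := if k is 0%N then 1 else 0.

Definition trunc_poly a k : {poly T} := \poly_(i < k.+1) a i.

(* Below degree [k], convolution is multiplication of truncated polynomials,
   so the ring laws of [conv] are inherited from [{poly T}]. *)
Lemma conv_trunc_poly a b k i :
  (i <= k)%N -> conv a b i = (trunc_poly a k * trunc_poly b k)`_i.
Proof.
move=> ik; rewrite coefM; apply: eq_bigr => j _; rewrite !coef_poly.
have jk : (j < k.+1)%N by apply: leq_trans (ltn_ord j) _; rewrite ltnS.
by rewrite jk ltnS (leq_trans (leq_subr _ _) ik).
Qed.

Lemma convE a b k : conv a b k = (trunc_poly a k * trunc_poly b k)`_k.
Proof. exact: conv_trunc_poly. Qed.

Lemma convA a b c k : conv (conv a b) c k = conv a (conv b c) k.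
Proof.
have -> : conv (conv a b) c k = (trunc_poly a k * trunc_poly b k * trunc_poly c k)`_k.
  rewrite coefM; apply: eq_bigr => i _.
  by rewrite (conv_trunc_poly _ _ (ltnSE (ltn_ord i))) coef_poly ltnS leq_subr.
have -> : conv a (conv b c) k = (trunc_poly a k * (trunc_poly b k * trunc_poly c k))`_k.
  rewrite [RHS]coefM; apply: eq_bigr => i _.
  by rewrite (conv_trunc_poly _ _ (leq_subr i k)) coef_poly ltn_ord.
by rewrite mulrA.
Qed.

Lemma convC a b k : conv a b k = conv b a k.
Proof. by rewrite !convE mulrC. Qed.

Lemma convDl a b c k : conv (fun i => a i + b i) c k = conv a c k + conv b c k.
Proof. by rewrite /conv -big_split; apply: eq_bigr => i _; rewrite mulrDl. Qed.

Lemma conv1l a k : conv delta0 a k = a k.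
Proof.
rewrite /conv big_ord_recl /= mul1r subn0 big1 ?addr0 // => i _.
by rewrite mul0r.
Qed.

End Convolution.

Record pseries (T : Type) := PSeries { pcoef : nat -> T }.

HB.instance Definition _ (T : Type) := gen_eqMixin (pseries T).
HB.instance Definition _ (T : Type) := gen_choiceMixin (pseries T).

Section PowerSeriesRing.
Variable T : comNzRingType.
Local Notation pseries := (pseries T).
Implicit Types X Y Z : pseries.

Lemma pcoef_inj X Y : pcoef X =1 pcoef Y -> X = Y.
Proof. by case: X Y => [x] [y] /= /funext ->. Qed.

Definition padd X Y := PSeries (fun n => pcoef X n + pcoef Y n).
Definition popp X := PSeries (fun n => - pcoef X n).
Definition pzero := PSeries (fun _ => 0 : T).
Definition pmul X Y := PSeries (conv (pcoef X) (pcoef Y)).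
Definition pone := PSeries (@delta0 T).

Lemma paddA : associative padd.
Proof. by move=> X Y Z; apply: pcoef_inj => n /=; rewrite addrA. Qed.

Lemma paddC : commutative padd.
Proof. by move=> X Y; apply: pcoef_inj => n /=; rewrite addrC. Qed.

Lemma pladd0l : left_id pzero padd.
Proof. by move=> X; apply: pcoef_inj => n /=; rewrite add0r. Qed.

Lemma paddNl : left_inverse pzero popp padd.
Proof. by move=> X; apply: pcoef_inj => n /=; rewrite addNr. Qed.

Lemma pmulA : associative pmul.
Proof. by move=> X Y Z; apply: pcoef_inj => n /=; rewrite -convA. Qed.

Lemma pmulC : commutative pmul.
Proof. by move=> X Y; apply: pcoef_inj => n /=; rewrite convC. Qed.

Lemma pmul1l : left_id pone pmul.
Proof. by move=> X; apply: pcoef_inj => n /=; rewrite conv1l. Qed.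

Lemma pmulDl : left_distributive pmul padd.
Proof. by move=> X Y Z; apply: pcoef_inj => n /=; rewrite convDl. Qed.

Lemma pone_neq0 : pone != pzero.
Proof. by apply/eqP => /(congr1 (fun X => pcoef X 0)) /= /eqP; rewrite oner_eq0. Qed.

End PowerSeriesRing.

HB.instance Definition _ (T : comNzRingType) :=
  GRing.isZmodule.Build (pseries T) (@paddA T) (@paddC T) (@pladd0l T) (@paddNl T).
HB.instance Definition _ (T : comNzRingType) :=
  GRing.Zmodule_isComNzRing.Build (pseries T)
    (@pmulA T) (@pmulC T) (@pmul1l T) (@pmulDl T) (@pone_neq0 T).

Section PowerSeriesTheory.
Variable T : comNzRingType.
Local Notation pseries := (pseries T).
Implicit Types X Y : pseries.

Lemma pcoefD X Y n : pcoef (X + Y) n = pcoef X n + pcoef Y n. Proof. by []. Qed.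
Lemma pcoefB X Y n : pcoef (X - Y) n = pcoef X n - pcoef Y n. Proof. by []. Qed.
Lemma pcoefM X Y n : pcoef (X * Y) n = \sum_(k < n.+1) pcoef X k * pcoef Y (n - k)%N.
Proof. by []. Qed.

Lemma pcoefM0 X Y : pcoef (X * Y) 0 = pcoef X 0 * pcoef Y 0.
Proof. by rewrite pcoefM big_ord1. Qed.

Definition plambda : pseries := PSeries (fun n => (n == 1)%:R).

Lemma pcoef_lambdaM X n :
  pcoef (plambda * X) n = if n is n'.+1 then pcoef X n' else 0.
Proof.
rewrite pcoefM; case: n => [|n]; first by rewrite big_ord1 mul0r.
rewrite !big_ord_recl /= mul0r mul1r add0r subn1 big1 ?addr0 // => i _.
by rewrite mul0r.
Qed.

Definition pmap (f : T -> T) X := PSeries (fun n => f (pcoef X n)).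

Lemma pcoef_map f X n : pcoef (pmap f X) n = f (pcoef X n).
Proof. by []. Qed.

Lemma pmapB (f : {additive T -> T}) : zmod_morphism (pmap f).
Proof. by move=> X Y; apply: pcoef_inj => n /=; rewrite raddfB. Qed.

HB.instance Definition _ (f : {additive T -> T}) :=
  GRing.isZmodMorphism.Build pseries pseries (pmap f) (pmapB f).

Lemma pmap_derivation (d : {additive T -> T}) :
  (forall x y, d (x * y) = d x * y + x * d y) ->
  forall X Y, pmap d (X * Y) = pmap d X * Y + X * pmap d Y.
Proof.
move=> dM X Y; apply: pcoef_inj => n.
by rewrite pcoefD /= raddf_sum -big_split; apply: eq_bigr => i _; rewrite dM.
Qed.

Definition peuler X := PSeries (fun n => pcoef X n *+ n).

Lemma pcoef_euler X n : pcoef (peuler X) n = pcoef X n *+ n.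
Proof. by []. Qed.

Lemma peulerB : zmod_morphism peuler.
Proof. by move=> X Y; apply: pcoef_inj => n /=; rewrite mulrnBl. Qed.

HB.instance Definition _ := GRing.isZmodMorphism.Build pseries pseries peuler peulerB.

Lemma peulerM X Y : peuler (X * Y) = peuler X * Y + X * peuler Y.
Proof.
apply: pcoef_inj => n; rewrite pcoefD /= /conv -sumrMnl -big_split.
apply: eq_bigr => -[i lt_in] _ /=.
by rewrite mulrnAl mulrnAr -mulrnDr; congr (_ *+ _); lia.
Qed.

Lemma pmap_euler (d : {additive T -> T}) X : pmap d (peuler X) = peuler (pmap d X).
Proof. by apply: pcoef_inj => n /=; rewrite raddfMn. Qed.

End PowerSeriesTheory.

Arguments plambda {T}.

Lemma mulmx2E (T : comNzRingType) (A B : 'M[T]_2) i j :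
  (A *m B) i j = A i ord0 * B ord0 j + A i ord_max * B ord_max j.
Proof.
by rewrite mxE big_ord_recr big_ord1 (_ : widen_ord _ ord0 = ord0) //; apply: val_inj.
Qed.

Lemma mxtrace2 (T : comNzRingType) (A : 'M[T]_2) :
  \tr A = A ord0 ord0 + A ord_max ord_max.
Proof.
by rewrite /mxtrace big_ord_recr big_ord1 (_ : widen_ord _ ord0 = ord0) //; apply: val_inj.
Qed.

Lemma det2 (T : comNzRingType) (A : 'M[T]_2) :
  \det A = A ord0 ord0 * A ord_max ord_max - A ord0 ord_max * A ord_max ord0.
Proof.
rewrite (expand_det_row _ ord0) !big_ord_recl big_ord0 addr0 /cofactor !det_mx11 !mxE /=.
rewrite /bump /= expr0 expr1 !mul1r mulN1r mulrN.
by congr (_ * A _ _ - A _ _ * A _ _); apply: val_inj.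
Qed.

Lemma mxtrace_gauge (T : comNzRingType) n (A B R S : 'M[T]_n.+1) c :
  R *m S = 1 -> \tr (S *m A *m R + c *: B) = \tr A + c * \tr B.
Proof. by move=> RS; rewrite mxtraceD mxtraceZ mxtrace_mulC mulmxA RS mul1mx. Qed.

Section Derivation.
Variable T : comNzRingType.
Variable d : {additive T -> T}.
Hypothesis dM : forall x y, d (x * y) = d x * y + x * d y.

Lemma derivation1 : d 1 = 0.
Proof.
by have /eqP := dM 1 1; rewrite !mulr1 mul1r -subr_eq subrr => /eqP <-.
Qed.

Lemma derivation_inv x y : x * y = 1 -> d y = - (y * y * d x).
Proof.
move=> xy; apply/eqP; rewrite -subr_eq0 opprK; apply/eqP.
transitivity (y * d (x * y) + d y * (1 - x * y)); first by rewrite dM; ring.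
by rewrite xy derivation1 subrr !mulr0 addr0.
Qed.

Lemma jacobi2 (R S : 'M[T]_2) : S *m R = 1 -> \tr (S *m map_mx d R) * \det R = d (\det R).
Proof.
move=> SR; have SRE i j : (S *m R) i j = (i == j)%:R by rewrite SR mxE.
have := SRE ord0 ord0; have := SRE ord0 ord_max; have := SRE ord_max ord0.
have := SRE ord_max ord_max; rewrite !mulmx2E /= => e11 e10 e01 e00.
apply/eqP; rewrite -subr_eq0 mxtrace2 det2 !mulmx2E !mxE raddfB !dM; apply/eqP.
set r00 := R ord0 ord0; set r01 := R ord0 ord_max; set r10 := R ord_max ord0.
set r11 := R ord_max ord_max.
transitivity ((S ord0 ord0 * r00 + S ord0 ord_max * r10 - 1) * (r11 * d r00 - r01 * d r10)
  + (S ord0 ord0 * r01 + S ord0 ord_max * r11) * (r00 * d r10 - r10 * d r00)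
  + (S ord_max ord0 * r00 + S ord_max ord_max * r10) * (r11 * d r01 - r01 * d r11)
  + (S ord_max ord0 * r01 + S ord_max ord_max * r11 - 1) * (r00 * d r11 - r10 * d r01)).
  by ring.
by rewrite e00 e01 e10 e11 !subrr !mul0r !addr0.
Qed.

End Derivation.

Lemma logderiv_comm (T : comNzRingType) (d e : {additive T -> T}) :
  (forall x y, d (x * y) = d x * y + x * d y) ->
  (forall x y, e (x * y) = e x * y + x * e y) ->
  (forall x, d (e x) = e (d x)) ->
  forall x y, x * y = 1 -> e (d x * y) = d (e x * y).
Proof.
move=> dM eM de x y xy.
by rewrite eM dM (derivation_inv eM xy) (derivation_inv dM xy) de; ring.
Qed.

Section LaurentCoefficients.
Variable K : fieldType.
Implicit Types f g h : LS K.

Lemma lscoef_mk l (c : nat -> K) m :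
  lscoef (mkLS l c) m = match m - l with Posz k => c k | Negz _ => 0 end.
Proof. by []. Qed.

Lemma lscoef_cf f (i : nat) : lscoef f (lo f + i%:Z) = cf f i.
Proof. by rewrite /lscoef (_ : lo f + i%:Z - lo f = i%:Z) //; lia. Qed.

Lemma lscoef_lt_lo f m : m < lo f -> lscoef f m = 0.
Proof.
move=> lt_m_lo; rewrite /lscoef; case E: (m - lo f) => [k|//].
have : m - lo f < 0 by rewrite subr_lt0.
by rewrite E.
Qed.

Lemma lscoef_mk_shift l (F : int -> K) m :
  lscoef (mkLS l (fun k => F (l + k%:Z))) m = if l <= m then F m else 0.
Proof.
rewrite lscoef_mk; case E: (m - l) => [k|k].
  by rewrite (_ : l + k%:Z = m) ?ifT //; lia.
by rewrite ifF //; apply/negbTE; lia.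
Qed.

Lemma lscoefD f g m : lscoef (lsadd f g) m = lscoef f m + lscoef g m.
Proof.
rewrite /lsadd (lscoef_mk_shift _ (fun x => lscoef f x + lscoef g x)).
by case: ifP => // /negbT lt_m; rewrite !lscoef_lt_lo ?addr0 //; lia.
Qed.

Lemma lscoefN f m : lscoef (lsopp f) m = - lscoef f m.
Proof. by rewrite /lsopp lscoef_mk /lscoef /=; case: (m - lo f); rewrite ?oppr0. Qed.

Lemma lscoef0 m : lscoef (ls0 K) m = 0.
Proof. by rewrite lscoef_mk; case: (m - 0). Qed.

Lemma lscoef1 m : lscoef (ls1 K) m = (m == 0)%:R.
Proof. by rewrite lscoef_mk subr0; case: m => [[|k]|k]. Qed.

Lemma lscoefM f g m : lscoef (lsmul f g) m =
  match m - (lo f + lo g) with Posz k => conv (cf f) (cf g) k | Negz _ => 0 end.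
Proof. by []. Qed.

Definition window_sum (F G : int -> K) (a m : int) (N : nat) :=
  \sum_(i < N) F (a + i%:Z) * G (m - a - i%:Z).

Lemma window_sum_widen F G a m N0 N : (N0 <= N)%N ->
  (forall i : nat, (N0 <= i)%N -> F (a + i%:Z) * G (m - a - i%:Z) = 0) ->
  window_sum F G a m N = window_sum F G a m N0.
Proof.
move=> le_N0N vanish.
rewrite /window_sum [RHS](big_ord_widen N (fun i : nat => F (a + i%:Z) * G (m - a - i%:Z)) le_N0N).
rewrite [RHS]big_mkcond; apply: eq_bigr => i _.
by case: ifP => // /negbT; rewrite -leqNgt => /vanish.
Qed.

Lemma window_sum_shift F G a m (d N : nat) :
  (forall i : nat, (i < d)%N -> F (a + i%:Z) = 0) ->
  window_sum F G a m (d + N) = window_sum F G (a + d%:Z) m N.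
Proof.
move=> vanish; rewrite /window_sum big_split_ord /= big1 ?add0r.
  by apply: eq_bigr => i _; congr (F _ * G _); lia.
by move=> i _; rewrite vanish ?mul0r.
Qed.

Lemma lscoefM_window_lo f g m : exists N : nat, m - lo f - lo g < N%:Z /\
  lscoef (lsmul f g) m = window_sum (lscoef f) (lscoef g) (lo f) m N.
Proof.
rewrite lscoefM; case E: (m - (lo f + lo g)) => [k|k].
  exists k.+1; split; first by lia.
  apply: eq_bigr => -[i lt_ik] _ /=; rewrite lscoef_cf.
  by rewrite (_ : m - lo f - i%:Z = lo g + (k - i)%N%:Z) ?lscoef_cf //; lia.
by exists 0%N; split; [lia | rewrite /window_sum big_ord0].
Qed.

Lemma lscoefM_window f g m a b N :
  (forall j, j < a -> lscoef f j = 0) -> (forall j, j < b -> lscoef g j = 0) ->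
  m - a - b < N%:Z ->
  lscoef (lsmul f g) m = window_sum (lscoef f) (lscoef g) a m N.
Proof.
move=> fa gb ltN.
have [N' [ltN' ->]] := lscoefM_window_lo f g m.
set a' := Order.min a (lo f).
have [d Ed] : exists d : nat, a = a' + d%:Z by exists `|a - a'|%N; lia.
have [d' Ed'] : exists d : nat, lo f = a' + d%:Z by exists `|lo f - a'|%N; lia.
have -> : window_sum (lscoef f) (lscoef g) a m N =
          window_sum (lscoef f) (lscoef g) a' m (d + N).
  by rewrite window_sum_shift -?Ed // => i lt_id; apply: fa; lia.
have -> : window_sum (lscoef f) (lscoef g) (lo f) m N' =
          window_sum (lscoef f) (lscoef g) a' m (d' + N').
  by rewrite window_sum_shift -?Ed' // => i lt_id; apply: lscoef_lt_lo; lia.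
rewrite -(@window_sum_widen _ _ _ _ (d + N) (maxn (d + N) (d' + N'))) ?leq_maxl //; last first.
  by move=> i le_i; rewrite gb ?mulr0 //; lia.
rewrite -(@window_sum_widen _ _ _ _ (d' + N') (maxn (d + N) (d' + N'))) ?leq_maxr //.
by move=> i le_i; rewrite (@lscoef_lt_lo g) ?mulr0 //; lia.
Qed.

Lemma eq_lscoefM f1 f2 g1 g2 : lscoef f1 =1 lscoef f2 -> lscoef g1 =1 lscoef g2 ->
  lscoef (lsmul f1 g1) =1 lscoef (lsmul f2 g2).
Proof.
move=> ef eg m.
have ltN : m - lo f1 - lo g1 < (absz (m - lo f1 - lo g1)%R).+1%:Z by lia.
rewrite (@lscoefM_window f1 g1 m _ _ _ _ _ ltN); try by move=> j ?; rewrite lscoef_lt_lo.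
rewrite (@lscoefM_window f2 g2 m _ _ _ _ _ ltN).
- by apply: eq_bigr => i _; rewrite ef eg.
- by move=> j ?; rewrite -ef lscoef_lt_lo.
- by move=> j ?; rewrite -eg lscoef_lt_lo.
Qed.

Lemma lsmulC f g : lscoef (lsmul f g) =1 lscoef (lsmul g f).
Proof. by move=> m; rewrite !lscoefM (addrC (lo g)); case: (m - _) => // k; rewrite convC. Qed.

Lemma lsmulA f g h : lscoef (lsmul f (lsmul g h)) =1 lscoef (lsmul (lsmul f g) h).
Proof. by move=> m; rewrite !lscoefM /= addrA; case: (m - _) => // k; rewrite convA. Qed.

Lemma lsmul1 f : lscoef (lsmul (ls1 K) f) =1 lscoef f.
Proof.
by move=> m; rewrite lscoefM /= add0r /lscoef; case: (m - _) => // k; rewrite (conv1l (cf f)).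
Qed.

Lemma lsmulDl f g h : lscoef (lsmul (lsadd f g) h) =1
  (fun m => lscoef (lsmul f h) m + lscoef (lsmul g h) m).
Proof.
move=> m; set l := Order.min (lo f) (lo g).
have lift_lo f' : lo f' >= l -> lscoef f' =1 lscoef (mkLS l (fun k => lscoef f' (l + k%:Z))).
  move=> le_l j; rewrite lscoef_mk_shift; case: ifP => // /negbT lt_j.
  by rewrite lscoef_lt_lo //; lia.
rewrite (eq_lscoefM (lift_lo f _) (frefl _)) ?ge_min ?lexx //.
rewrite (eq_lscoefM (lift_lo g _) (frefl _)) ?ge_min ?lexx ?orbT //.
by rewrite !lscoefM /=; case: (m - _) => [k|k]; [exact: convDl | rewrite addr0].
Qed.

Lemma lscoef_deriv f m : lscoef (lsderiv f) m = (m + 1)%:~R * lscoef f (m + 1).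
Proof.
rewrite /lsderiv lscoef_mk; case E: (m - (lo f - 1)) => [k|k].
  by rewrite (_ : m + 1 = lo f + k%:Z) ?lscoef_cf //; lia.
by rewrite lscoef_lt_lo ?mulr0 //; lia.
Qed.

Lemma lsderivM f g m : lscoef (lsderiv (lsmul f g)) m =
  lscoef (lsmul (lsderiv f) g) m + lscoef (lsmul f (lsderiv g)) m.
Proof.
rewrite lscoef_deriv !lscoefM /=.
rewrite (_ : m - (lo f - 1 + lo g) = m + 1 - (lo f + lo g)); last by lia.
rewrite (_ : m - (lo f + (lo g - 1)) = m + 1 - (lo f + lo g)); last by lia.
case E: (m + 1 - (lo f + lo g)) => [k|k]; last by rewrite mulr0 addr0.
rewrite /conv -big_split mulr_sumr; apply: eq_bigr => -[i lt_ik] _ /=.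
rewrite (_ : m + 1 = (lo f + i%:Z) + (lo g + (k - i)%N%:Z)); last by lia.
by rewrite intrD; ring.
Qed.

End LaurentCoefficients.

Section LaurentType.
Variable K : fieldType.
(* An [LS K] has many representations of the same series; [laurent K] is the
   quotient, as the coefficient functions realised by some [LS K]. *)
Definition laurent := {x : int -> K | exists f : LS K, lscoef f =1 x}.
End LaurentType.

HB.instance Definition _ (K : fieldType) := gen_eqMixin (laurent K).
HB.instance Definition _ (K : fieldType) := gen_choiceMixin (laurent K).

Section LaurentRing.
Variable K : fieldType.
Local Notation laurent := (laurent K).
Implicit Types x y z : laurent.

Definition lcoef x : int -> K := sval x.
Definition lrepr x : LS K := sval (cid (svalP x)).
Definition inL (f : LS K) : laurent := exist _ (lscoef f) (ex_intro _ f (frefl _)).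

Lemma lreprP x : lscoef (lrepr x) =1 lcoef x.
Proof. exact: (svalP (cid (svalP x))). Qed.

Lemma lcoef_inL f : lcoef (inL f) = lscoef f.
Proof. by []. Qed.

Lemma lcoef_inj x y : lcoef x =1 lcoef y -> x = y.
Proof. by case: x y => [x ?] [y ?] /= /funext eq_xy; apply: eq_exist. Qed.

Definition ladd x y := inL (lsadd (lrepr x) (lrepr y)).
Definition lopp x := inL (lsopp (lrepr x)).
Definition lmul x y := inL (lsmul (lrepr x) (lrepr y)).
Definition lzero := inL (ls0 K).
Definition lone := inL (ls1 K).

Lemma lcoef_ladd x y m : lcoef (ladd x y) m = lcoef x m + lcoef y m.
Proof. by rewrite lcoef_inL lscoefD !lreprP. Qed.

Lemma lcoef_lopp x m : lcoef (lopp x) m = - lcoef x m.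
Proof. by rewrite lcoef_inL lscoefN lreprP. Qed.

Lemma lcoef_lzero m : lcoef lzero m = 0.
Proof. exact: lscoef0. Qed.

Lemma laddA : associative ladd.
Proof. by move=> x y z; apply: lcoef_inj => m; rewrite !lcoef_ladd addrA. Qed.

Lemma laddC : commutative ladd.
Proof. by move=> x y; apply: lcoef_inj => m; rewrite !lcoef_ladd addrC. Qed.

Lemma ladd0l : left_id lzero ladd.
Proof. by move=> x; apply: lcoef_inj => m; rewrite lcoef_ladd lcoef_lzero add0r. Qed.

Lemma laddNl : left_inverse lzero lopp ladd.
Proof. by move=> x; apply: lcoef_inj => m; rewrite lcoef_ladd lcoef_lopp lcoef_lzero addNr. Qed.

Lemma lmulA : associative lmul.
Proof.
move=> x y z; apply: lcoef_inj => m; rewrite !lcoef_inL.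
rewrite (eq_lscoefM (frefl _) (lreprP (lmul y z))) lsmulA.
by rewrite -(eq_lscoefM (lreprP (lmul x y)) (frefl _)).
Qed.

Lemma lmulC : commutative lmul.
Proof. by move=> x y; apply: lcoef_inj => m; rewrite !lcoef_inL lsmulC. Qed.

Lemma lmul1l : left_id lone lmul.
Proof.
move=> x; apply: lcoef_inj => m; rewrite lcoef_inL.
by rewrite (eq_lscoefM (lreprP lone) (frefl _)) lsmul1 lreprP.
Qed.

Lemma lmulDl : left_distributive lmul ladd.
Proof.
move=> x y z; apply: lcoef_inj => m; rewrite lcoef_ladd !lcoef_inL.
by rewrite (eq_lscoefM (lreprP (ladd x y)) (frefl _)) lsmulDl.
Qed.

Lemma lone_neq0 : lone != lzero.
Proof.
apply/eqP => /(congr1 (lcoef^~ 0)); rewrite lcoef_lzero lcoef_inL lscoef1 /=.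
by move/eqP; rewrite oner_eq0.
Qed.

End LaurentRing.

HB.instance Definition _ (K : fieldType) :=
  GRing.isZmodule.Build (laurent K) (@laddA K) (@laddC K) (@ladd0l K) (@laddNl K).
HB.instance Definition _ (K : fieldType) :=
  GRing.Zmodule_isComNzRing.Build (laurent K)
    (@lmulA K) (@lmulC K) (@lmul1l K) (@lmulDl K) (@lone_neq0 K).

Section LaurentTheory.
Variable K : fieldType.
Local Notation laurent := (laurent K).
Implicit Types (x y : laurent) (f g : LS K).

Lemma lcoefD x y m : lcoef (x + y) m = lcoef x m + lcoef y m.
Proof. exact: lcoef_ladd. Qed.

Lemma lcoefN x m : lcoef (- x) m = - lcoef x m.
Proof. exact: lcoef_lopp. Qed.

Lemma lcoefB x y m : lcoef (x - y) m = lcoef x m - lcoef y m.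
Proof. by rewrite lcoefD lcoefN. Qed.

Lemma lcoef0 m : lcoef (0 : laurent) m = 0.
Proof. exact: lcoef_lzero. Qed.

Lemma lcoef1 m : lcoef (1 : laurent) m = (m == 0)%:R.
Proof. exact: lscoef1. Qed.

Lemma lcoefMn x k m : lcoef (x *+ k) m = lcoef x m *+ k.
Proof. by elim: k => [|k IHk]; rewrite ?lcoef0 // !mulrS lcoefD IHk. Qed.

Lemma lcoefM x y m a b (N : nat) :
  (forall j, j < a -> lcoef x j = 0) -> (forall j, j < b -> lcoef y j = 0) ->
  m - a - b < N%:Z ->
  lcoef (x * y) m = \sum_(i < N) lcoef x (a + i%:Z) * lcoef y (m - a - i%:Z).
Proof.
move=> xa yb ltN; rewrite [LHS](@lscoefM_window _ _ _ m a b N).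
- by apply: eq_bigr => i _; rewrite !lreprP.
- by move=> j lt_ja; rewrite lreprP xa.
- by move=> j lt_jb; rewrite lreprP yb.
- exact: ltN.
Qed.

Lemma lcoef_bounded x : exists L, forall j, j < L -> lcoef x j = 0.
Proof. by exists (lo (lrepr x)) => j lt_j; rewrite -lreprP lscoef_lt_lo. Qed.

Lemma inLD f g : inL (lsadd f g) = inL f + inL g.
Proof. by apply: lcoef_inj => m; rewrite lcoefD !lcoef_inL lscoefD. Qed.

Lemma inLN f : inL (lsopp f) = - inL f.
Proof. by apply: lcoef_inj => m; rewrite lcoefN !lcoef_inL lscoefN. Qed.

Lemma inLM f g : inL (lsmul f g) = inL f * inL g.
Proof.
apply: lcoef_inj => m; apply: eq_lscoefM => j; exact/esym/lreprP.
Qed.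

Definition lderiv x : laurent := inL (lsderiv (lrepr x)).

Lemma lcoef_deriv x m : lcoef (lderiv x) m = (m + 1)%:~R * lcoef x (m + 1).
Proof. by rewrite lcoef_inL lscoef_deriv lreprP. Qed.

Lemma lderivB : zmod_morphism lderiv.
Proof. by move=> x y; apply: lcoef_inj => m; rewrite lcoefB !lcoef_deriv !lcoefB mulrBr. Qed.

Lemma lderivM x y : lderiv (x * y) = lderiv x * y + x * lderiv y.
Proof.
have lcoefE x' y' : lcoef (x' * y') =1 lscoef (lsmul (lrepr x') (lrepr y')) by [].
apply: lcoef_inj => m; rewrite lcoefD !lcoefE lcoef_deriv lcoefE -lscoef_deriv lsderivM.
by congr (_ + _); apply: eq_lscoefM => j; rewrite ?lreprP.
Qed.

End LaurentTheory.

Arguments lderiv {K}.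

HB.instance Definition _ (K : fieldType) :=
  GRing.isZmodMorphism.Build (laurent K) (laurent K) (@lderiv K) (@lderivB K).

Section Residue.
Variable K : fieldType.
Local Notation laurent := (laurent K).
Implicit Types x y u v : laurent.

Definition lholo x := forall m, m < 0 -> lcoef x m = 0.

Definition lmonomial (l : int) : laurent := inL (mkLS l (@delta0 K)).

Lemma lcoef_monomial l m : lcoef (lmonomial l) m = (m == l)%:R.
Proof.
rewrite lcoef_inL lscoef_mk; case E: (m - l) => [[|k]|k] /=.
- by rewrite (_ : m == l); [|apply/eqP; lia].
- by rewrite (_ : m == l = false) //; apply/eqP; lia.
- by rewrite (_ : m == l = false) //; apply/eqP; lia.
Qed.

Lemma lcoef_monomialM l x m : lcoef (lmonomial l * x) m = lcoef x (m - l).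
Proof.
have [L xL] := lcoef_bounded x.
rewrite (@lcoefM _ _ _ m l L (absz (m - l - L)%R).+1); first last.
- by lia.
- exact: xL.
- by move=> j lt_jl; rewrite lcoef_monomial; case: eqP => // E; lia.
rewrite big_ord_recl big1 => [|i _]; rewrite lcoef_monomial.
  by rewrite /= !addr0 eqxx mul1r.
by rewrite lift0 (_ : _ == l = false) ?mul0r //; apply/eqP; lia.
Qed.

Lemma lmonomial_inv : lmonomial 1 * lmonomial (-1) = 1.
Proof.
apply: lcoef_inj => m; rewrite lcoef_monomialM lcoef_monomial lcoef1.
by congr (nat_of_bool _)%:R; apply/eqP/eqP; lia.
Qed.

Lemma lderiv_monomial1 : lderiv (lmonomial 1) = 1.
Proof.
apply: lcoef_inj => m; rewrite lcoef_deriv lcoef_monomial lcoef1.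
have [->|m_neq0] := eqVneq m 0; first by rewrite /= mul1r.
by rewrite (_ : m + 1 == 1 = false) ?mulr0 //; apply/eqP; lia.
Qed.

Lemma lres_deriv x : lcoef (lderiv x) (-1) = 0.
Proof. by rewrite lcoef_deriv mul0r. Qed.

Lemma lholoB x y : lholo x -> lholo y -> lholo (x - y).
Proof. by move=> hx hy m m_lt0; rewrite lcoefB hx ?hy ?subr0. Qed.

Lemma lholoM x y : lholo x -> lholo y -> lholo (x * y).
Proof.
move=> hx hy m m_lt0; rewrite (@lcoefM _ x y m 0 0 0%N) ?big_ord0 //.
by rewrite !subr0.
Qed.

Lemma lholo_deriv x : lholo x -> lholo (lderiv x).
Proof.
move=> hx m m_lt0; rewrite lcoef_deriv.
have [->|m1_neq0] := eqVneq (m + 1) 0; first by rewrite mul0r.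
by rewrite hx ?mulr0 //; lia.
Qed.

(* If [u] is holomorphic with [u(0) != 0], any inverse [v] is holomorphic:
   the coefficients of [v] below [0] vanish by induction from its lowest one. *)
Lemma lholo_inv u v : lholo u -> lcoef u 0 != 0 -> u * v = 1 -> lholo v.
Proof.
move=> hu u0 uv; have [L vL] := lcoef_bounded v.
suff vanish j : L + j%:Z < 0 -> lcoef v (L + j%:Z) = 0.
  move=> m m_lt0; have [/vL //|le_Lm] := ltrP m L.
  by rewrite (_ : m = L + (absz (m - L))%:Z) ?vanish //; lia.
elim/ltn_ind: j => j IHj lt0.
have : lcoef (u * v) (L + j%:Z) = 0.
  by rewrite uv lcoef1 (_ : (L + j%:Z == 0) = false) //; apply/eqP; lia.
rewrite (@lcoefM _ u v (L + j%:Z) 0 L j.+1) //; last by lia.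
rewrite big_ord_recl big1 ?addr0 => [|i _].
  by move=> /eqP; rewrite mulf_eq0 (negbTE u0) /= => /eqP.
rewrite lift0 (_ : L + j%:Z - i.+1%:Z = L + (j - i.+1)%N%:Z); last by have := ltn_ord i; lia.
by rewrite IHj ?mulr0 //; have := ltn_ord i; lia.
Qed.

(* Writing [d = z u] with [u] a holomorphic unit, [d'/d = 1/z + u'/u]. *)
Lemma lres_logderiv d e : lholo d -> lcoef d 0 = 0 -> lcoef d 1 != 0 -> d * e = 1 ->
  lcoef (lderiv d * e) (-1) = 1.
Proof.
move=> hd d0 d1 de.
set z := lmonomial 1; set u := lmonomial (-1) * d; set v := z * e.
have hu : lholo u.
  move=> m m_lt0; rewrite lcoef_monomialM.
  by have [->//|?] := eqVneq (m - -1) 0; apply: hd; lia.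
have u0 : lcoef u 0 != 0 by rewrite lcoef_monomialM sub0r opprK.
have dE : d = z * u by rewrite mulrA lmonomial_inv mul1r.
have uv : u * v = 1.
  rewrite (_ : u * v = z * lmonomial (-1) * (d * e)); last by rewrite /u /v; ring.
  by rewrite lmonomial_inv de mul1r.
have eE : e = lmonomial (-1) * v by rewrite /v mulrA (mulrC _ z) lmonomial_inv mul1r.
have -> : lderiv d * e = lmonomial (-1) + lderiv u * v.
  rewrite dE lderivM lderiv_monomial1 mul1r eE.
  rewrite (_ : _ * _ = lmonomial (-1) * (u * v) + z * lmonomial (-1) * (lderiv u * v)).
    by rewrite uv lmonomial_inv !mul1r mulr1.
  by rewrite /z; ring.
rewrite lcoefD lcoef_monomial eqxx lholoM ?addr0 //; first exact: lholo_deriv.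
exact: lholo_inv uv.
Qed.

End Residue.

Lemma pscoef_psres (K : fieldType) (F : PS K) n m :
  pscoef (psres F) n m = (m == 0)%:R * pscoef F n (-1).
Proof. by rewrite /pscoef lscoef_mk subr0; case: m => [[|k]|k]; rewrite ?mul1r ?mul0r. Qed.

Lemma pscoef_psopp (K : fieldType) (F : PS K) n m :
  pscoef (psopp F) n m = - pscoef F n m.
Proof. exact: lscoefN. Qed.

Lemma pscoef_pslambda (K : fieldType) n m :
  pscoef (pslambda K) n m = ((n == 1%N) && (m == 0))%:R.
Proof. by case: n => [|[|n]]; rewrite /pscoef ?lscoef0 ?lscoef1. Qed.

Lemma pscoef_m2tr (K : fieldType) (A : M2 K) n m :
  pscoef (m2tr A) n m = pscoef (A ord0 ord0) n m + pscoef (A ord_max ord_max) n m.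
Proof. exact: lscoefD. Qed.

Section LaurentPowerSeries.
Variable K : fieldType.
Local Notation series := (pseries (laurent K)).
Implicit Types (F G : PS K) (A B : M2 K).

Definition psL F : series := PSeries (fun n => inL (F n)).

Lemma lcoef_psL F n m : lcoef (pcoef (psL F) n) m = pscoef F n m.
Proof. by []. Qed.

Lemma psL_eq F G : pseq F G -> psL F = psL G.
Proof. by move=> FG; apply: pcoef_inj => n; apply: lcoef_inj => m; apply: FG. Qed.

Lemma psLD F G : psL (psadd F G) = psL F + psL G.
Proof. by apply: pcoef_inj => n; rewrite pcoefD /= inLD. Qed.

Lemma psLN F : psL (psopp F) = - psL F.
Proof. by apply: pcoef_inj => n /=; rewrite inLN. Qed.

Lemma psL0 : psL (ps0 K) = 0.
Proof. by apply: pcoef_inj. Qed.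

Lemma psL1 : psL (ps1 K) = 1.
Proof. by apply: pcoef_inj => -[|n]. Qed.

Lemma psLM F G : psL (psmul F G) = psL F * psL G.
Proof.
apply: pcoef_inj => n; rewrite pcoefM /= /psmul.
by elim/big_rec2: _ => [|i a b _ <-]; rewrite ?inLD ?inLM.
Qed.

Lemma psL_sum2 (F : 'I_2 -> PS K) :
  psL (\big[@psadd K/ps0 K]_(k < 2) F k) = \sum_(k < 2) psL (F k).
Proof. by elim/big_rec2: _ => [|i a b _ <-]; rewrite ?psL0 ?psLD. Qed.

Lemma psL_lam F : psL (pslam F) = plambda * psL F.
Proof. by apply: pcoef_inj => n; rewrite pcoef_lambdaM; case: n. Qed.

Lemma psL_deriv F : psL (psderiv F) = pmap lderiv (psL F).
Proof.
apply: pcoef_inj => n; apply: lcoef_inj => m.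
by rewrite /= !lscoef_deriv lreprP.
Qed.

Definition mxL A : 'M[series]_2 := \matrix_(i, j) psL (A i j).

Lemma mxL_eq A B : m2eq A B -> mxL A = mxL B.
Proof. by move=> AB; apply/matrixP => i j; rewrite !mxE (psL_eq (AB i j)). Qed.

Lemma mxL1 : mxL (m2one K) = 1.
Proof. by apply/matrixP => i j; rewrite !mxE /m2one; case: (i == j); rewrite ?psL1 ?psL0. Qed.

Lemma mxLD A B : mxL (m2add A B) = mxL A + mxL B.
Proof. by apply/matrixP => i j; rewrite !mxE psLD. Qed.

Lemma mxLM A B : mxL (m2mul A B) = mxL A *m mxL B.
Proof. by apply/matrixP => i j; rewrite !mxE psL_sum2; apply: eq_bigr => k _; rewrite psLM !mxE. Qed.

Lemma mxL_lam A : mxL (m2lam A) = plambda *: mxL A.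
Proof. by apply/matrixP => i j; rewrite !mxE psL_lam. Qed.

Lemma mxL_deriv A : mxL (m2deriv A) = map_mx (pmap lderiv) (mxL A).
Proof. by apply/matrixP => i j; rewrite !mxE psL_deriv. Qed.

Lemma psL_tr A : psL (m2tr A) = \tr (mxL A).
Proof. by rewrite mxtrace2 psLD !mxE. Qed.

Lemma psL_det A : psL (m2det A) = \det (mxL A).
Proof. by rewrite det2 psLD psLN !psLM !mxE. Qed.

Lemma mxL_gauge S A R : mxL (gauge S A R) =
  mxL S *m mxL A *m mxL R + plambda *: (mxL S *m map_mx (pmap lderiv) (mxL R)).
Proof. by rewrite mxLD !mxLM mxL_lam mxLM mxL_deriv. Qed.

End LaurentPowerSeries.

Section GaugeResidue.
Variables (K : fieldType) (K0 : [pchar K] =i pred0).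
Local Notation series := (pseries (laurent K)).
Variables (R S : 'M[series]_2).
Hypotheses (RS : R *m S = 1) (SR : S *m R = 1).
Hypothesis R0_holo : forall i j, lholo (pcoef (R i j) 0).
Hypotheses (D00 : lcoef (pcoef (\det R) 0) 0 = 0) (D01 : lcoef (pcoef (\det R) 0) 1 != 0).

(* By Jacobi, the trace is [D'/D] with [D = det R].  For [n > 0], [n] times its
   [lambda^n]-part is the [lambda^n]-part of [(theta D / D)'], where
   [theta = lambda d/dlambda] commutes with [d/dz]; a derivative has no residue. *)
Lemma lres_trace_logderiv n :
  lcoef (pcoef (\tr (S *m map_mx (pmap lderiv) R)) n) (-1) = (n == 0)%:R.
Proof.
have DE : \det R * \det S = 1 by rewrite -det_mulmx RS det1.
rewrite -[\tr _]mulr1 -DE mulrA (jacobi2 (pmap_derivation (@lderivM K)) SR).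
case: n => [|n].
  rewrite pcoefM0 lres_logderiv // -?pcoefM0 ?DE //.
  by rewrite det2 pcoefB !pcoefM0; apply: lholoB; apply: lholoM.
have := congr1 (fun X => lcoef (pcoef X n.+1) (-1))
  (logderiv_comm (pmap_derivation (@lderivM K)) (@peulerM _) (@pmap_euler _ _) DE).
rewrite pcoef_euler pcoef_map lcoefMn lres_deriv => /eqP.
by rewrite -[_ *+ n.+1]mulr_natr mulf_eq0 ((pcharf0P K).1 K0) orbF => /eqP.
Qed.

Lemma lres_trace_gauge A n :
  lcoef (pcoef (\tr (S *m A *m R + plambda *: (S *m map_mx (pmap lderiv) R))) n) (-1)
  = lcoef (pcoef (\tr A) n) (-1) + (n == 1)%:R.
Proof.
rewrite mxtrace_gauge // pcoefD lcoefD pcoef_lambdaM.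
by case: n => [|n]; rewrite ?lcoef0 ?lres_trace_logderiv.
Qed.

End GaugeResidue.

Theorem lemma4p12 (R : realType) (A Rm S : M2 R[i]) :
  (* R is in GL_2(C((z))[[lambda]]) with inverse S *)
  m2eq (m2mul Rm S) (m2one _) -> m2eq (m2mul S Rm) (m2one _) ->
  (* (1) A is diagonal *)
  m2diag A ->
  (* (2) R(z,0) has entries in C[[z]] *)
  (forall i j m, (m < 0)%R -> pscoef (Rm i j) 0 m = 0) ->
  (* (3) det R(z,0) has a first-order zero at z = 0 *)
  pscoef (m2det Rm) 0 0 = 0 -> pscoef (m2det Rm) 0 1 != 0 ->
  (* (4) R^{-1} A R + lambda R^{-1} dR/dz has entries in C[[z, lambda]] *)
  (forall i j, ps_holo (gauge S A Rm i j)) ->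
  (* conclusion: res_{z=0} tr A = - lambda *)
  pseq (psres (m2tr A)) (psopp (pslambda R[i])).
Proof.
move=> RS SR _ R0_holo D00 D01 gauge_holo n m.
have RSl : mxL Rm *m mxL S = 1 by rewrite -mxLM (mxL_eq RS) mxL1.
have SRl : mxL S *m mxL Rm = 1 by rewrite -mxLM (mxL_eq SR) mxL1.
have R0l i j : lholo (pcoef (mxL Rm i j) 0) by rewrite mxE => m'; apply: R0_holo.
have tr_gauge0 : pscoef (m2tr (gauge S A Rm)) n (-1) = 0.
  by rewrite pscoef_m2tr !gauge_holo // addr0.
have := lres_trace_gauge (@pchar_num _) RSl SRl R0l.
rewrite -psL_det !lcoef_psL => /(_ D00 D01 (mxL A) n).
rewrite -mxL_gauge -!psL_tr !lcoef_psL tr_gauge0 => /eqP.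
rewrite eq_sym addr_eq0 => /eqP trA.
rewrite pscoef_psres trA pscoef_psopp pscoef_pslambda.
by rewrite mulrN -natrM mulnb andbC.
Qed.
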